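(* Let $m\ge 2$ candidates and $n$ voters be given, let $2\le\ell\le m$, and run the randomized Minimax algorithm described in the context. For each candidate $c$, let $c_{\min}\in\arg\min_{c'\neq c}\mathrm{sc}_{\mathrm{MM}}(c,c')$. Then for every $\epsilon\in(0,1]$, the probability that the normalized score $\mathrm{S}[c]$ computed by the algorithm for $c$ differs from the true Minimax score $\mathrm{sc}_{\mathrm{MM}}(c)$ by a multiplicative factor of at least $1\pm\epsilon$ (i.e. $\mathrm{S}[c]<(1-\epsilon)\mathrm{sc}_{\mathrm{MM}}(c)$ or $\mathrm{S}[c]>(1+\epsilon)\mathrm{sc}_{\mathrm{MM}}(c)$) is at most $$m\exp\!\left(-\frac{\epsilon^2\ell^2\,\mathrm{sc}_{\mathrm{MM}}(c,c_{\min})}{6m^2}\right).$$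
   Context: An election consists of a set $V$ of $n$ voters and a set $C$ of $m$ candidates; each voter $v$ has a strict linear order $\succ_v$ over $C$. For $c,c'\in C$, $\mathrm{sc}_{\mathrm{MM}}(c,c')=|\{v\in V: c\succ_v c'\}|$, and the Minimax score is $\mathrm{sc}_{\mathrm{MM}}(c)=\min_{c'\neq c}\mathrm{sc}_{\mathrm{MM}}(c,c')$; the Minimax rule selects the candidates with maximal Minimax score. Randomized Minimax algorithm: set $\mathrm{S}[c,c']=0$ for all $c,c'$. Independently for each voter $v$, choose a uniformly random $S_v\subseteq C$ with $|S_v|=\ell$ and ask $v$ to rank $S_v$; for every ordered pair of distinct $c,c'\in S_v$ with $c\succ_v c'$, increase $\mathrm{S}[c,c']$ by 1. Then for each $c$ set $\mathrm{S}[c]=n\cdot\min\{\mathrm{S}[c,c']/(\mathrm{S}[c,c']+\mathrm{S}[c',c]) : c'\neq c,\ \mathrm{S}[c,c']+\mathrm{S}[c',c]>0\}$, and return a candidate with maximal $\mathrm{S}[c]$. *)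

From Stdlib Require Import Reals.
From mathcomp Require Import all_boot.
Set Implicit Arguments. Unset Strict Implicit. Unset Printing Implicit Defensive.

Section Minimax.
Local Open Scope R_scope.
Variables (C : finType) (n : nat) (pref : 'I_n -> rel C).

(* pref v c c' means  c >_v c'. A strict linear order. *)
Definition strict_linear_order (r : rel C) : Prop :=
  irreflexive r /\ transitive r /\ (forall x y, x != y -> r x y || r y x).

Definition scMM2 (c c' : C) : nat := #|[set v : 'I_n | pref v c c']|.

(* sc_MM(c) = min_{c' <> c} sc_MM(c,c'); n is a harmless identity since
   every sc_MM(c,c') <= n and the range is nonempty when |C| >= 2. *)
Definition scMM (c : C) : nat := \big[minn/n]_(c' | c' != c) scMM2 c c'.

(* Outcome of the random queries: for each voter v the asked subset S_v. *)
Definition outcome := {ffun 'I_n -> {set C}}.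

Definition Omega (l : nat) : {set outcome} := [set w : outcome | [forall v, #|w v| == l]].

Definition Sc2 (w : outcome) (c c' : C) : nat :=
  #|[set v : 'I_n | [&& c \in w v, c' \in w v & pref v c c']]|.

(* min { S[c,c'] / (S[c,c'] + S[c',c]) : c' <> c, denominator > 0 };
   None encodes the minimum over the empty set (= +infinity). *)
Definition Smin (w : outcome) (c : C) : option R :=
  foldr (fun c' acc =>
           if (c' != c) && (0 < Sc2 w c c' + Sc2 w c' c)%N then
             let r := (INR (Sc2 w c c') / INR (Sc2 w c c' + Sc2 w c' c)) in
             Some (match acc with None => r | Some a => Rmin r a end)
           else acc) None (enum C).

Definition Sc (w : outcome) (c : C) : option R :=
  option_map (fun x => (INR n * x)) (Smin w c).

Definition deviates (eps : R) (w : outcome) (c : C) : bool :=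
  match Sc w c with
  | None => true
  | Some s =>
      (if Rlt_dec s ((1 - eps) * INR (scMM c)) then true else false)
      || (if Rlt_dec ((1 + eps) * INR (scMM c)) s then true else false)
  end.

Definition prob_deviates (l : nat) (eps : R) (c : C) : R :=
  (INR #|[set w in Omega l | deviates eps w c]| / INR #|Omega l|).

End Minimax.

From Stdlib Require Import Reals Lra Psatz.
From Coquelicot Require Import Coquelicot.
From HB Require Import structures.
From mathcomp Require Import all_boot zify.
Set Implicit Arguments. Unset Strict Implicit. Unset Printing Implicit Defensive.
Open Scope R_scope.

(* Chernoff's method on each pairwise comparison.  For a candidate c' let X = S[c,c'],
   Y = S[c',c] and A = sc_MM(c,c').  The score S[c] is too large only if
   n X > (1 + eps) A (X + Y) for c' = cmin, and too small only if n X < (1 - eps) A (X + Y)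
   for some c' (as sc_MM(c) <= A); both events read  d (n X - (1 + d) A (X + Y)) >= 0
   with d = eps, resp. d = -eps.  The voters sample independently and each one ranks the
   pair {c, c'} with probability p = l(l-1)/(m(m-1)) >= l^2/(2m^2), so with lam = 2d/(3n)
   the moment generating function of lam (n X - (1 + d) A (X + Y)) is at most
   exp (p (A (e^(lam (n - A - d A)) - 1) + (n - A) (e^(-lam (1 + d) A) - 1))), and
   e^t - 1 <= t + 2t^2/3 on [-4/3, 2/3] bounds the exponent by -p d^2 A / 3.  Markov's
   inequality and a union bound over these m events give the claim. *)

Lemma le_of_derive_nonneg (f f' : R -> R) a b : a <= b ->
  (forall x, is_derive f x (f' x)) -> (forall x, a <= x <= b -> 0 <= f' x) ->
  f a <= f b.
Proof.
move=> le_ab df f'_ge0; case: (Req_dec a b) => [<- | neq_ab]; first lra.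
have [x [Hfab Hx]] :=
  MVT_cor2 f f' a b ltac:(lra) (fun x _ => proj1 (is_derive_Reals _ _ _) (df x)).
have := f'_ge0 x ltac:(lra); nra.
Qed.

Lemma exp_le_compat x y : x <= y -> exp x <= exp y.
Proof. by case/Rle_lt_or_eq_dec => [/exp_increasing/Rlt_le | ->]; [|apply: Rle_refl]. Qed.

Lemma exp_le_quartic t : t <= 8/3 -> exp t <= 1 + t + t^2/2 + t^3/6 + t^4/8.
Proof.
move=> Ht.
(* [h] decreases on (-oo, 0] and increases on [0, 8/3], so [h t >= h 0 = 1]. *)
pose h (x : R) := (1 + x + x^2/2 + x^3/6 + x^4/8) * exp (- x).
pose h' (x : R) := x^3 * (8 - 3 * x) / 24 * exp (- x).
have dh (x : R) : is_derive h x (h' x) by rewrite /h /h' /=; auto_derive; [|field].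
have dnh (x : R) : is_derive (fun y => - h y) x (- h' x) by apply: is_derive_opp.
suff h_ge1 : h 0 <= h t.
  have := exp_pos t; have : exp (- t) * exp t = 1 by rewrite -exp_plus Rplus_opp_l exp_0.
  rewrite /h Ropp_0 exp_0 in h_ge1; nra.
have pos_e x : 0 < exp (- x) by apply: exp_pos.
case: (Rle_or_lt 0 t) => [t_ge0|t_lt0].
  apply: (le_of_derive_nonneg t_ge0 dh) => x Hx; rewrite /h'.
  have := pos_e x; have : 0 <= x^3 * (8 - 3 * x) by apply: Rmult_le_pos; [apply: pow_le|]; lra.
  nra.
apply: Ropp_le_cancel.
apply: (le_of_derive_nonneg (Rlt_le _ _ t_lt0) dnh) => x Hx; rewrite /h'.
have := pos_e x; have : x^3 * (8 - 3 * x) <= 0 by apply: Rmult_le_0_r; nra.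
nra.
Qed.

Lemma exp_sub1_le_quadratic t : -4/3 <= t <= 2/3 -> exp t - 1 <= t + 2/3 * t^2.
Proof.
move=> Ht; have := @exp_le_quartic t ltac:(lra).
have : t^2 * ((t - 2/3) * (t + 2)) <= 0 by apply: Rmult_le_0_l; nra.
nra.
Qed.

Lemma mgf_exponent_normalized q d : 0 <= q <= 1 -> -1 <= d <= 1 ->
  q * (exp (2/3 * d * (1 - q - d * q)) - 1)
  + (1 - q) * (exp (- (2/3) * d * (1 + d) * q) - 1) <= - (d^2 * q) / 3.
Proof.
move=> Hq Hd.
set t1 := 2/3 * d * (1 - q - d * q); set t2 := - (2/3) * d * (1 + d) * q.
have Ht1 : -4/3 <= t1 <= 2/3.
  have : -1 <= 1 - q - d * q <= 1 by split; nra.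
  rewrite /t1; split; nra.
have Ht2 : -4/3 <= t2 <= 2/3.
  have : -1/4 <= d * (1 + d) <= 2 by have := pow2_ge_0 (d + 1/2); split; nra.
  have -> : t2 = - (2/3) * (d * (1 + d)) * q by rewrite /t2; ring.
  move: (d * (1 + d)) => u Hu; split; nra.
have lin : q * t1 + (1 - q) * t2 = - (2/3) * d^2 * q by rewrite /t1 /t2; ring.
have quad : q * t1^2 + (1 - q) * t2^2 = 4/9 * d^2 * q * (1 - q + d^2 * q).
  by rewrite /t1 /t2; field.
have e1 := exp_sub1_le_quadratic Ht1; have e2 := exp_sub1_le_quadratic Ht2.
have d2_le1 : d^2 <= 1 by nra.
have d2q_ge0 : 0 <= d^2 * q by apply: Rmult_le_pos; [nra|lra].
have w_le1 : 1 - q + d^2 * q <= 1.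
  have := Rmult_le_compat_r _ _ _ (proj1 Hq) d2_le1; lra.
have := Rmult_le_compat_l _ _ _ (proj1 Hq) e1.
have := Rmult_le_compat_l (1 - q) _ _ ltac:(lra) e2.
have := Rmult_le_compat_l _ _ _ d2q_ge0 w_le1.
nra.
Qed.

Lemma mgf_exponent_le a n d : 0 <= a <= n -> 0 < n -> -1 <= d <= 1 ->
  a * (exp (2 * d / (3 * n) * (n - a - d * a)) - 1)
  + (n - a) * (exp (2 * d / (3 * n) * (- (1 + d) * a)) - 1) <= - (d^2 * a) / 3.
Proof.
move=> Ha n_gt0 Hd.
have Hq : 0 <= a / n <= 1 by split; [apply: Rdiv_le_0_compat | apply/Rle_div_l]; lra.
have := mgf_exponent_normalized Hq Hd.
have -> : 2/3 * d * (1 - a / n - d * (a / n)) = 2 * d / (3 * n) * (n - a - d * a).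
  by field; lra.
have -> : - (2/3) * d * (1 + d) * (a / n) = 2 * d / (3 * n) * (- (1 + d) * a).
  by field; lra.
set x := exp _ - 1; set y := exp _ - 1 => H.
have -> : a * x + (n - a) * y = n * (a / n * x + (1 - a / n) * y) by field; lra.
have -> : - (d^2 * a) / 3 = n * (- (d^2 * (a / n)) / 3) by field; lra.
by apply: Rmult_le_compat_l; lra.
Qed.

HB.instance Definition _ := Monoid.isComLaw.Build R 0 Rplus
  (fun x y z => esym (Rplus_assoc x y z)) Rplus_comm Rplus_0_l.
HB.instance Definition _ := Monoid.isComLaw.Build R 1 Rmult
  (fun x y z => esym (Rmult_assoc x y z)) Rmult_comm Rmult_1_l.
HB.instance Definition _ := Monoid.isMulLaw.Build R 0 Rmult Rmult_0_l Rmult_0_r.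
HB.instance Definition _ :=
  Monoid.isAddLaw.Build R Rmult Rplus Rmult_plus_distr_r Rmult_plus_distr_l.

Lemma Rsum_le (I : finType) (P : pred I) (F G : I -> R) :
  (forall i, P i -> F i <= G i) ->
  \big[Rplus/0]_(i | P i) F i <= \big[Rplus/0]_(i | P i) G i.
Proof. by move=> le_FG; apply: (big_ind2 Rle) => // *; lra. Qed.

Lemma Rsum_ge0 (I : finType) (P : pred I) (F : I -> R) :
  (forall i, P i -> 0 <= F i) -> 0 <= \big[Rplus/0]_(i | P i) F i.
Proof. by move=> F_ge0; apply: (big_ind (Rle 0)) => // *; lra. Qed.

Lemma Rprod_le (I : finType) (P : pred I) (F G : I -> R) :
  (forall i, P i -> 0 <= F i <= G i) ->
  \big[Rmult/1]_(i | P i) F i <= \big[Rmult/1]_(i | P i) G i.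
Proof.
move=> le_FG.
suff [] : 0 <= \big[Rmult/1]_(i | P i) F i <= \big[Rmult/1]_(i | P i) G i by [].
by apply: (big_ind2 (fun x y => 0 <= x <= y)) => // *; nra.
Qed.

Lemma INR_card (T : finType) (A : {pred T}) : INR #|A| = \big[Rplus/0]_(x in A) 1.
Proof. by rewrite big_const; elim: #|A| => // k IH; rewrite S_INR IH /= Rplus_comm. Qed.

Lemma Rsum_const (I : finType) x : \big[Rplus/0]_(i : I) x = INR #|I| * x.
Proof. by rewrite INR_card big_distrl /=; apply: eq_big => // i _; rewrite Rmult_1_l. Qed.

Lemma INR_card_set (T : finType) (P : pred T) :
  INR #|[set x | P x]| = \big[Rplus/0]_x (if P x then 1 else 0).
Proof. by rewrite INR_card big_mkcond; apply: eq_bigr => x _; rewrite inE. Qed.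

Lemma exp_sum (I : finType) (P : pred I) (F : I -> R) :
  exp (\big[Rplus/0]_(i | P i) F i) = \big[Rmult/1]_(i | P i) exp (F i).
Proof. by apply: (big_morph exp exp_plus exp_0). Qed.

Lemma Rsum_if (I : finType) (A : {set I}) (x y : R) :
  \big[Rplus/0]_i (if i \in A then x else y) = INR #|A| * x + (INR #|I| - INR #|A|) * y.
Proof.
have -> : INR #|I| - INR #|A| = INR #|~: A| by rewrite -(cardsC A) plus_INR; lra.
rewrite (bigID (mem A)) /= (eq_bigr (fun=> x * 1)) => [|i ->]; last lra.
rewrite [X in _ + X](eq_bigr (fun=> y * 1)) => [|i /negbTE ->]; last lra.
rewrite -!big_distrr /= !INR_card Rmult_comm [y * _]Rmult_comm.
by congr (_ * _ + _ * _); apply: eq_bigl => i; rewrite inE.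
Qed.

Section Draws.
Local Open Scope nat_scope.

Lemma card_draws_pair (T : finType) (k : nat) (x y : T) : x != y -> 2 <= k <= #|T| ->
  #|[set S : {set T} | (#|S| == k) && (x \in S) && (y \in S)]| = 'C(#|T| - 2, k - 2).
Proof.
move=> neq_xy /andP[k_ge2 k_le].
set P := [set x; y].
have cardP : #|P| = 2 by rewrite cards2 neq_xy.
(* Complementation is a bijection onto the (#|T| - k)-subsets of ~: P. *)
have -> : [set S : {set T} | (#|S| == k) && (x \in S) && (y \in S)]
        = (@setC T) @^-1: [set A : {set T} | A \subset ~: P & #|A| == #|T| - k].
  apply/setP => S; rewrite !inE setCS subUset !sub1set andbC.
  have := cardsC S; move: k_le; set N := #|T| => k_le.
  case: (x \in S) (y \in S) => [] []; rewrite ?andbT ?andbF //= => ?.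
  by apply/eqP/eqP => ?; lia.
rewrite card_preimset; last exact: inv_inj (@setCK T).
rewrite cards_draws cardsCs setCK cardP -[RHS]bin_sub; last by lia.
by congr 'C(_, _); lia.
Qed.

Lemma mul_bin_pair m k : 2 <= k <= m ->
  m * (m - 1) * 'C(m - 2, k - 2) = k * (k - 1) * 'C(m, k).
Proof.
case: m => [|[|m]]; case: k => [|[|k]] //= le_km.
rewrite !subn2 !subn1 /= -mulnA mul_bin_diag mulnCA (mul_bin_diag m.+2 k.+1).
by rewrite mulnA [k.+1 * _]mulnC.
Qed.

Lemma bin_pair_lb m k : 2 <= k <= m -> k ^ 2 * 'C(m, k) <= 2 * m ^ 2 * 'C(m - 2, k - 2).
Proof.
move=> Hk; have E := mul_bin_pair Hk; move: Hk => /andP[k_ge2 le_km].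
rewrite -(@leq_pmul2l (k - 1)); last by lia.
have -> : (k - 1) * (k ^ 2 * 'C(m, k)) = k * (m * (m - 1)) * 'C(m - 2, k - 2).
  by rewrite -mulnA E !mulnA; congr (_ * _); nia.
by rewrite [in X in _ <= X]mulnA leq_mul2r; apply/orP; right; nia.
Qed.

End Draws.

Section Sampling.
Variables (C : finType) (n l : nat).

Definition pair_prob (c c' : C) : R :=
  INR #|[set S : {set C} | (#|S| == l) && (c \in S) && (c' \in S)]| / INR 'C(#|C|, l).

Lemma pair_prob_lb (c c' : C) : c != c' -> (2 <= l <= #|C|)%N ->
  INR l ^ 2 / (2 * INR #|C| ^ 2) <= pair_prob c c'.
Proof.
move=> neq_cc' Hl; have /andP[l_ge2 l_le] := Hl.
have binl_gt0 : 0 < INR 'C(#|C|, l) by apply/lt_0_INR/ltP; rewrite bin_gt0.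
have m_gt0 : 0 < INR #|C| by apply/lt_0_INR/ltP; lia.
have key : INR l ^ 2 * INR 'C(#|C|, l) <= 2 * INR #|C| ^ 2 * INR 'C(#|C| - 2, l - 2).
  have := le_INR _ _ (elimT leP (bin_pair_lb Hl)).
  by rewrite !mult_INR /=; lra.
rewrite /pair_prob.
have -> : #|[set S : {set C} | (#|S| == l) && (c \in S) && (c' \in S)]| = 'C(#|C| - 2, l - 2).
  exact: card_draws_pair.
apply/(Rle_div_r _ _ _ binl_gt0).
rewrite (_ : _ / _ * _ = INR l ^ 2 * INR 'C(#|C|, l) / (2 * INR #|C| ^ 2)); last by field; lra.
by apply/Rle_div_l; nra.
Qed.

Lemma sum_Omega_prod (h : 'I_n -> {set C} -> R) :
  \big[Rplus/0]_(w in Omega C n l) \big[Rmult/1]_v h v (w v)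
  = \big[Rmult/1]_v \big[Rplus/0]_(S : {set C} | #|S| == l) h v S.
Proof.
rewrite bigA_distr_big; apply: eq_bigl => w.
by rewrite inE; apply/forallP/ffun_onP => Hw v; have := Hw v.
Qed.

Lemma card_Omega : INR #|Omega C n l| = \big[Rmult/1]_(v < n) INR 'C(#|C|, l).
Proof.
rewrite INR_card (eq_bigr (fun w => \big[Rmult/1]_(v < n) 1)) => [|w _]; last first.
  by rewrite big1_eq.
rewrite (sum_Omega_prod (fun _ _ => 1)); apply: eq_bigr => v _.
by rewrite -card_draws INR_card; apply: eq_bigl => S; rewrite inE.
Qed.

Lemma sum_draws_exp_pair (c c' : C) x : (l <= #|C|)%N ->
  \big[Rplus/0]_(S : {set C} | #|S| == l) exp (if (c \in S) && (c' \in S) then x else 0)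
  <= INR 'C(#|C|, l) * exp (pair_prob c c' * (exp x - 1)).
Proof.
move=> l_le; have N_gt0 : 0 < INR 'C(#|C|, l) by apply/lt_0_INR/ltP; rewrite bin_gt0.
have sum_draws : \big[Rplus/0]_(S : {set C} | #|S| == l) 1 = INR 'C(#|C|, l).
  by rewrite -card_draws INR_card; apply: eq_bigl => S; rewrite inE.
have sum_pairs : \big[Rplus/0]_(S : {set C} | [&& #|S| == l, c \in S & c' \in S]) 1
                 = pair_prob c c' * INR 'C(#|C|, l).
  rewrite /pair_prob Rmult_assoc Rinv_l ?Rmult_1_r; last lra.
  by rewrite INR_card; apply: eq_bigl => S; rewrite inE andbA.
rewrite (eq_bigr (fun S : {set C} =>
                    1 + (if (c \in S) && (c' \in S) then exp x - 1 else 0))); last first.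
  by move=> S _; case: ifP; rewrite ?exp_0; lra.
rewrite big_split /= -big_mkcondr /= [X in _ + X](eq_bigr (fun=> (exp x - 1) * 1)); last first.
  by move=> *; lra.
rewrite -big_distrr /= sum_draws sum_pairs.
rewrite (_ : _ + _ = INR 'C(#|C|, l) * (1 + pair_prob c c' * (exp x - 1))); last ring.
by apply: Rmult_le_compat_l; [lra | exact: exp_ineq1_le].
Qed.

Lemma mgf_pair_indicator (c c' : C) (k : 'I_n -> R) : (l <= #|C|)%N ->
  \big[Rplus/0]_(w in Omega C n l)
     exp (\big[Rplus/0]_v (if (c \in w v) && (c' \in w v) then k v else 0))
  <= INR #|Omega C n l| * exp (pair_prob c c' * \big[Rplus/0]_v (exp (k v) - 1)).
Proof.
move=> l_le; under eq_bigr do rewrite exp_sum.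
rewrite (sum_Omega_prod (fun v S => exp (if (c \in S) && (c' \in S) then k v else 0))).
rewrite card_Omega big_distrr exp_sum -big_split /=.
apply: Rprod_le => v _; split; last exact: sum_draws_exp_pair.
by apply: Rsum_ge0 => S _; apply/Rlt_le/exp_pos.
Qed.

Lemma card_Omega_gt0 : (l <= #|C|)%N -> 0 < INR #|Omega C n l|.
Proof.
move=> l_le; rewrite card_Omega; apply: (big_ind (Rlt 0)) => [|x y|v _]; first lra.
  by move=> *; apply: Rmult_lt_0_compat.
by apply/lt_0_INR/ltP; rewrite bin_gt0.
Qed.

End Sampling.

Section RandomizedMinimax.
Variables (C : finType) (n l : nat) (pref : 'I_n -> rel C).
Hypothesis pref_order : forall v, strict_linear_order (pref v).
Variable c : C.

Lemma pref_antisym v x y : x != y -> pref v y x = ~~ pref v x y.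
Proof.
move=> neq_xy; have [irr [trans total]] := pref_order v.
have := total x y neq_xy; case pxy: (pref v x y) => //= _.
by apply/negP => pyx; have := trans _ _ _ pxy pyx; rewrite irr.
Qed.

Definition pair_stat (c' : C) (k1 k2 : R) (w : outcome C n) : R :=
  \big[Rplus/0]_v (if (c \in w v) && (c' \in w v) then (if pref v c c' then k1 else k2) else 0).

Lemma pair_statE c' k1 k2 w : c' != c ->
  pair_stat c' k1 k2 w = k1 * INR (Sc2 pref w c c') + k2 * INR (Sc2 pref w c' c).
Proof.
move=> neq_c'c; have neq_cc' : c != c' by rewrite eq_sym.
rewrite /Sc2 !INR_card_set !big_distrr -big_split /=.
apply: eq_bigr => v _; rewrite (pref_antisym v neq_cc').
by case: (c \in w v); case: (c' \in w v); case: (pref v c c') => /=; lra.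
Qed.

Lemma mgf_pair_stat c' k1 k2 : (l <= #|C|)%N ->
  \big[Rplus/0]_(w in Omega C n l) exp (pair_stat c' k1 k2 w)
  <= INR #|Omega C n l| * exp (pair_prob l c c' *
       (INR (scMM2 pref c c') * (exp k1 - 1)
        + (INR n - INR (scMM2 pref c c')) * (exp k2 - 1))).
Proof.
move=> l_le.
have := @mgf_pair_indicator C n l c c' (fun v => if pref v c c' then k1 else k2) l_le.
congr (_ <= _ * exp (_ * _)).
rewrite (eq_bigr (fun v => if v \in [set v | pref v c c'] then exp k1 - 1 else exp k2 - 1)).
  by rewrite Rsum_if card_ord.
by move=> v _; rewrite inE; case: (pref v c c').
Qed.

(* By [pair_statE], [tail_stat d c' w = lam (n X - (1 + d) A (X + Y))] in the notation of
   the header; the [pair_stat] form exposes its independent per-voter summands. *)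
Definition tail_stat (d : R) (c' : C) : outcome C n -> R :=
  let A := INR (scMM2 pref c c') in
  let lam := 2 * d / (3 * INR n) in
  pair_stat c' (lam * (INR n - A - d * A)) (lam * (- (1 + d) * A)).

Lemma scMM2_le c1 c2 : (scMM2 pref c1 c2 <= n)%N.
Proof. by rewrite -[X in (_ <= X)%N]card_ord max_card. Qed.

Lemma mgf_tail_stat d c' : c' != c -> -1 <= d <= 1 -> (2 <= l <= #|C|)%N -> (0 < n)%N ->
  \big[Rplus/0]_(w in Omega C n l) exp (tail_stat d c' w)
  <= INR #|Omega C n l|
     * exp (- (d^2 * INR l ^ 2 * INR (scMM2 pref c c')) / (6 * INR #|C| ^ 2)).
Proof.
move=> neq_c'c Hd Hl n_gt0; have /andP[l_ge2 l_le] := Hl.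
apply: Rle_trans (mgf_pair_stat _ _ _ l_le) _.
apply/Rmult_le_compat_l/exp_le_compat; first exact: pos_INR.
set A := INR (scMM2 pref c c').
have n_pos : 0 < INR n by apply/lt_0_INR/ltP.
have HA : 0 <= A <= INR n by split; [apply: pos_INR | apply/le_INR/leP/scMM2_le].
have m_pos : 0 < INR #|C| by apply/lt_0_INR/ltP; lia.
have neq_cc' : c != c' by rewrite eq_sym.
have p_lb := pair_prob_lb neq_cc' Hl.
have bound_ge0 : 0 <= INR l ^ 2 / (2 * INR #|C| ^ 2).
  by apply: Rdiv_le_0_compat; [apply: pow2_ge_0 | nra].
have dA_ge0 : 0 <= d^2 * A by apply: Rmult_le_pos; [apply: pow2_ge_0 | lra].
apply: Rle_trans (Rmult_le_compat_l _ _ _ _ (mgf_exponent_le HA n_pos Hd)) _; first lra.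
rewrite (_ : - (d^2 * INR l ^ 2 * A) / (6 * INR #|C| ^ 2)
             = INR l ^ 2 / (2 * INR #|C| ^ 2) * (- (d^2 * A) / 3)); last by field; lra.
nra.
Qed.

Definition compared (w : outcome C n) (c' : C) : bool :=
  (c' != c) && (0 < Sc2 pref w c c' + Sc2 pref w c' c)%N.

Definition ratio (w : outcome C n) (c' : C) : R :=
  INR (Sc2 pref w c c') / INR (Sc2 pref w c c' + Sc2 pref w c' c).

Lemma SminP w :
  match Smin pref w c with
  | None => forall c', ~~ compared w c'
  | Some r => (exists2 c', compared w c' & r = ratio w c')
              /\ (forall c', compared w c' -> r <= ratio w c')
  end.
Proof.
rewrite /Smin; set F := (X in foldr X).
suff foldP s : match foldr F None s with
  | None => forall c', c' \in s -> ~~ compared w c'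
  | Some r => (exists2 c', compared w c' & r = ratio w c')
              /\ (forall c', c' \in s -> compared w c' -> r <= ratio w c')
  end.
  have := foldP (enum C); case: foldr => [r [ex le_r] | none_s].
    by split=> // c'; apply: le_r; rewrite mem_enum.
  by move=> c'; apply: none_s; rewrite mem_enum.
elim: s => [|x s IH] //=; rewrite {1}/F -/(compared w x) -/(ratio w x).
case cx: (compared w x); move: IH; case: (foldr F None s) => [a [ex le_a] | none_s] /=.
- split; first by rewrite /Rmin; case: Rle_dec => _; [exists x | ].
  move=> c'; rewrite in_cons => /orP[/eqP -> _ | s_c' cc']; first exact: Rmin_l.
  exact: Rle_trans (Rmin_r _ _) (le_a _ s_c' cc').
- split; first by exists x.
  move=> c'; rewrite in_cons => /orP[/eqP -> _ | s_c' cc']; first exact: Rle_refl.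
  by have := none_s _ s_c'; rewrite cc'.
- split=> // c'; rewrite in_cons => /orP[/eqP -> | ]; [by rewrite cx | exact: le_a].
- move=> c'; rewrite in_cons => /orP[/eqP -> | ]; [by rewrite cx | exact: none_s].
Qed.

Lemma tail_stat_uncompared d c' w : c' != c -> ~~ compared w c' -> tail_stat d c' w = 0.
Proof.
move=> neq_c'c; rewrite /compared neq_c'c /= -leqNgt leqn0 addn_eq0.
by case/andP => /eqP X0 /eqP Y0; rewrite /tail_stat pair_statE // X0 Y0 /=; ring.
Qed.

Lemma tail_stat_ge0 d c' w : c' != c -> (0 < n)%N -> compared w c' ->
  0 <= d * (INR n * ratio w c' - (1 + d) * INR (scMM2 pref c c')) ->
  0 <= tail_stat d c' w.
Proof.
move=> neq_c'c n_gt0 /andP[_ XY_gt0]; rewrite /tail_stat pair_statE // /ratio plus_INR.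
have n_pos : 0 < INR n by apply/lt_0_INR/ltP.
have XY_pos : 0 < INR (Sc2 pref w c c') + INR (Sc2 pref w c' c).
  by rewrite -plus_INR; apply/lt_0_INR/ltP.
move: XY_pos; set X := INR (Sc2 _ _ _ _); set Y := INR (Sc2 _ _ _ _).
set A := INR (scMM2 _ _ _) => XY_pos H.
rewrite (_ : _ + _ = 2 / (3 * INR n) * (X + Y) * (d * (INR n * (X / (X + Y)) - (1 + d) * A))).
  by apply: Rmult_le_pos => //; apply: Rmult_le_pos; [apply: Rdiv_le_0_compat |]; lra.
by field; lra.
Qed.

Lemma scMM_argmin cmin : cmin != c ->
  (forall c', c' != c -> (scMM2 pref c cmin <= scMM2 pref c c')%N) ->
  scMM pref c = scMM2 pref c cmin.
Proof.
move=> neq_cmin argmin; apply/eqP; rewrite eqn_leq; apply/andP; split.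
  rewrite /scMM; elim: (index_enum C) (mem_index_enum cmin) => // x s IH.
  rewrite in_cons big_cons => /orP[/eqP <- | s_cmin]; first by rewrite neq_cmin geq_minl.
  by case: (x != c); rewrite ?geq_min IH ?orbT.
apply: (big_ind (fun k => scMM2 pref c cmin <= k)%N) => //; first exact: scMM2_le.
by move=> *; rewrite leq_min; apply/andP.
Qed.

(* Index [c] stands for the upper tail, tested against [cmin]; any other [j] for the lower
   tail tested against [j]. *)
Definition tail_stat_at (eps : R) (cmin j : C) : outcome C n -> R :=
  if j == c then tail_stat eps cmin else tail_stat (- eps) j.

Lemma deviates_tail_stat eps cmin w : 0 < eps <= 1 -> (0 < n)%N -> cmin != c ->
  (forall c', c' != c -> (scMM2 pref c cmin <= scMM2 pref c c')%N) ->
  deviates pref eps w c -> exists j, 0 <= tail_stat_at eps cmin j w.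
Proof.
move=> Heps n_gt0 neq_cmin argmin.
have n_pos : 0 < INR n by apply/lt_0_INR/ltP.
rewrite /deviates /Sc (scMM_argmin neq_cmin argmin); have := SminP w.
case: Smin => [r [[c1 cc1 ->] r_min] | none] /=; last first.
  move=> _; exists c; rewrite /tail_stat_at eqxx tail_stat_uncompared ?none //.
  exact: Rle_refl.
case: (Rlt_dec _ _) => [lower _ | _ /=].
  have /andP[neq_c1 _] := cc1; exists c1; rewrite /tail_stat_at (negbTE neq_c1).
  apply: tail_stat_ge0 => //.
  have : (1 - eps) * INR (scMM2 pref c cmin) <= (1 - eps) * INR (scMM2 pref c c1).
    by apply: Rmult_le_compat_l; [lra | apply/le_INR/leP/argmin].
  nra.
case: (Rlt_dec ((1 + eps) * _) _) => [upper _ | //]; exists c; rewrite /tail_stat_at eqxx.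
case ccmin : (compared w cmin).
  by apply: tail_stat_ge0 => //; have := Rmult_le_compat_l _ _ _ (pos_INR n) (r_min _ ccmin); nra.
by rewrite tail_stat_uncompared ?ccmin //; apply: Rle_refl.
Qed.

Lemma prob_deviates_le1 eps : (l <= #|C|)%N -> prob_deviates pref l eps c <= 1.
Proof.
move=> l_le; have Omega_pos := card_Omega_gt0 n l_le.
rewrite /prob_deviates; apply/Rle_div_l => //; rewrite Rmult_1_l.
by apply/le_INR/leP/subset_leq_card/subsetP => w; rewrite inE => /andP[].
Qed.

Section Deviation.
Variables (eps : R) (cmin : C).
Hypotheses (eps_range : 0 < eps <= 1) (neq_cmin : cmin != c).
Hypothesis argmin : forall c', c' != c -> (scMM2 pref c cmin <= scMM2 pref c c')%N.

Lemma card_deviates_le : (0 < n)%N ->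
  INR #|[set w in Omega C n l | deviates pref eps w c]|
  <= \big[Rplus/0]_(j : C) \big[Rplus/0]_(w in Omega C n l) exp (tail_stat_at eps cmin j w).
Proof.
move=> n_gt0; rewrite exchange_big INR_card /=.
rewrite (eq_bigl (fun w => (w \in Omega C n l) && deviates pref eps w c)) => [|w]; last first.
  by rewrite inE.
rewrite big_mkcondr; apply: Rsum_le => w _.
have exp_sum_ge0 (P : pred C) :
    0 <= \big[Rplus/0]_(j | P j) exp (tail_stat_at eps cmin j w).
  by apply: Rsum_ge0 => j _; apply/Rlt_le/exp_pos.
case dev: (deviates pref eps w c); last exact: exp_sum_ge0.
have [j tail_j] := deviates_tail_stat eps_range n_gt0 neq_cmin argmin dev.
rewrite (bigD1 j) //=; have := exp_ineq1_le (tail_stat_at eps cmin j w).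
by have := exp_sum_ge0 (fun i => i != j); lra.
Qed.

Lemma mgf_tail_stat_at j : (2 <= l <= #|C|)%N -> (0 < n)%N ->
  \big[Rplus/0]_(w in Omega C n l) exp (tail_stat_at eps cmin j w)
  <= INR #|Omega C n l|
     * exp (- (eps^2 * INR l ^ 2 * INR (scMM2 pref c cmin)) / (6 * INR #|C| ^ 2)).
Proof.
move=> Hl n_gt0; rewrite /tail_stat_at; case: eqP => [_ | /eqP neq_j].
  by apply: mgf_tail_stat => //; lra.
apply: Rle_trans (mgf_tail_stat neq_j _ Hl n_gt0) _; first lra.
apply/Rmult_le_compat_l/exp_le_compat; first exact: pos_INR.
have m_pos : 0 < INR #|C| by apply/lt_0_INR/ltP; case/andP: Hl => *; lia.
have S_le : INR (scMM2 pref c cmin) <= INR (scMM2 pref c j) by apply/le_INR/leP/argmin.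
have el_ge0 : 0 <= eps ^ 2 * INR l ^ 2 by apply: Rmult_le_pos; apply: pow2_ge_0.
rewrite /Rdiv; apply: Rmult_le_compat_r.
  by apply/Rlt_le/Rinv_0_lt_compat; have := pow_lt _ 2 m_pos; lra.
by rewrite (_ : (- eps) ^ 2 = eps ^ 2); [nra | ring].
Qed.

End Deviation.

End RandomizedMinimax.

Theorem theorem3 (C : finType) (n l : nat) (pref : 'I_n -> rel C)
  (Hpref : forall v, strict_linear_order (pref v))
  (Hm : (2 <= #|C|)%N) (Hl2 : (2 <= l)%N) (Hlm : (l <= #|C|)%N)
  (c cmin : C) (Hcmin : cmin != c)
  (Hargmin : forall c', c' != c -> (scMM2 pref c cmin <= scMM2 pref c c')%N)
  (eps : R) (Heps : 0 < eps <= 1) :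
  prob_deviates pref l eps c <=
     INR #|C| * exp (- (eps ^ 2 * INR l ^ 2 * INR (scMM2 pref c cmin))
                      / (6 * INR #|C| ^ 2)).
Proof.
have : 2 <= INR #|C| by apply: (le_INR 2); apply/leP.
set m := INR #|C| => m_ge2.
have Omega_pos := card_Omega_gt0 n Hlm.
case: (posnP (scMM2 pref c cmin)) => [S0 | S_gt0].
  rewrite S0 /= Rmult_0_r Ropp_0 /Rdiv Rmult_0_l exp_0 Rmult_1_r.
  by have := prob_deviates_le1 pref c eps Hlm; lra.
have n_gt0 : (0 < n)%N := leq_trans S_gt0 (scMM2_le _ _ _).
have Hl : (2 <= l <= #|C|)%N by rewrite Hl2 Hlm.
rewrite /prob_deviates; apply/Rle_div_l => //.
apply: Rle_trans (card_deviates_le l Hpref Heps Hcmin Hargmin n_gt0) _.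
apply: Rle_trans (Rsum_le (fun j _ => mgf_tail_stat_at Heps Hcmin Hargmin j Hl n_gt0)) _.
by rewrite /m Rsum_const; apply: Req_le; ring.
Qed.
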